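(* Let $u$ be a smooth solution of the equivariant Skyrme equation in $\Omega$ with $u(t,0)=0$. Then \[ \lim_{T\to0^+}\frac1T\int_0^T\!\!\int_0^t e(t,r)\,r\,dr\,dt=\lim_{T\to0^+}E(T). \]
   Context: Fix $\alpha>0$, $T_0>0$. The equivariant Skyrme equation is \[ w(u_{tt}-u_{rr}) - \Big(1-\tfrac{\alpha^2\sin^2u}{r^2}\Big)\tfrac{u_r}{r} + \tfrac{\sin 2u}{2r^2}\big[\alpha^2(u_t^2-u_r^2)+1\big]=0,\qquad w:=1+\tfrac{\alpha^2\sin^2u}{r^2}. \] $\Omega=\{(t,r):0<t\le T_0,\ 0\le r\le t\}$; a smooth solution in $\Omega$ is a smooth function on $\Omega$ satisfying the equation for $r>0$. Energy density $e:=w\frac{u_t^2+u_r^2}{2}+\frac{\sin^2u}{2r^2}$; energy $E(T):=\int_0^T e(T,r)\,r\,dr$ (the limit $\lim_{T\to0^+}E(T)$ exists and is finite). *)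

From Stdlib Require Import Reals Lra.
Open Scope R_scope.

Definition Omega (T0 t r : R) : Prop := 0 < t <= T0 /\ 0 <= r <= t.

Definition open2 (U : R -> R -> Prop) : Prop :=
  forall t r, U t r -> exists d, 0 < d /\
    forall t' r', Rabs (t' - t) < d -> Rabs (r' - r) < d -> U t' r'.

Definition cont2_on (U : R -> R -> Prop) (f : R -> R -> R) : Prop :=
  forall t r, U t r -> forall eps, 0 < eps -> exists d, 0 < d /\
    forall t' r', Rabs (t' - t) < d -> Rabs (r' - r) < d ->
      Rabs (f t' r' - f t r) < eps.

Fixpoint Ck_on (U : R -> R -> Prop) (k : nat) (f : R -> R -> R) : Prop :=
  match k with
  | O => cont2_on U f
  | S k' => cont2_on U f /\
      exists ft fr : R -> R -> R,
        (forall t r, U t r ->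
            derivable_pt_lim (fun s => f s r) t (ft t r) /\
            derivable_pt_lim (fun s => f t s) r (fr t r)) /\
        Ck_on U k' ft /\ Ck_on U k' fr
  end.

Definition smooth_on (U : R -> R -> Prop) (f : R -> R -> R) : Prop :=
  forall k, Ck_on U k f.

Definition wS (alpha ux r : R) : R := 1 + alpha ^ 2 * (sin ux) ^ 2 / r ^ 2.

Definition skyrme_eq (alpha r ux ut ur utt urr : R) : Prop :=
  wS alpha ux r * (utt - urr)
  - (1 - alpha ^ 2 * (sin ux) ^ 2 / r ^ 2) * (ur / r)
  + sin (2 * ux) / (2 * r ^ 2) * (alpha ^ 2 * (ut ^ 2 - ur ^ 2) + 1) = 0.

Definition edens (alpha ux ut ur r : R) : R :=
  wS alpha ux r * ((ut ^ 2 + ur ^ 2) / 2) + (sin ux) ^ 2 / (2 * r ^ 2).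

Definition is_RInt (f : R -> R) (a b v : R) : Prop :=
  exists pr : Riemann_integrable f a b, RiemannInt pr = v.

Definition lim_right0 (T0 : R) (f : R -> R) (L : R) : Prop :=
  forall eps, 0 < eps -> exists d, 0 < d /\
    forall T, 0 < T -> T < d -> T <= T0 -> Rabs (f T - L) < eps.

From Pilot Require Import Defs.
From Stdlib Require Import Reals Lra Lia Classical ClassicalEpsilon.
From Coquelicot Require Import Coquelicot.
(* [Defs] is imported again so that [is_RInt] denotes the Riemann-integral
   predicate of the statement rather than Coquelicot's homonym. *)
Import Defs.
Open Scope R_scope.

(* With e the energy density, write E(T) = int_0^T e(T,r) r dr.  The proof
   rests on the local conservation law
        d/dt (e r) = d/dr (w r u_t u_r)                      (Skyrme equation)
   Integrating it over {de <= r <= t, T1 <= t <= T2} shows that the energy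
   outside the ball of radius de changes only through the light cone r = t,
   where the flux e r + w r u_t u_r = r (w (u_t+u_r)^2/2 + sin^2 u/(2 r^2)) is
   nonnegative, and through the sphere r = de, where the flux is O(de) because
   u(t,0) = 0.  Letting de -> 0 shows that E is nondecreasing; being also
   nonnegative and continuous, E has a limit L at 0+, and so has its mean
   value (1/T) int_0^T E. *)

(* Pointwise quantities, as functions of the values ux = u, p = u_t, q = u_r at
   radius r: the radial energy density e r and the radial flux w r u_t u_r. *)
Definition radial_density alpha ux p q r := edens alpha ux p q r * r.
Definition radial_flux alpha ux p q r := r * wS alpha ux r * p * q.

(* Derivatives of the density (in t) and of the flux (in r), when u, u_t, u_r
   vary with derivatives a, b, c. *)
Definition density_rate alpha ux p q r a b c :=
  r * ((alpha^2 * sin ux * cos ux * (p^2+q^2) / r^2 + sin ux * cos ux / r^2) * a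
       + wS alpha ux r * (p * b + q * c)).

Definition flux_rate alpha ux p q r a b c :=
  wS alpha ux r * p * q
  + r * (alpha^2 * (2 * sin ux * cos ux * a / r^2 - 2 * (sin ux)^2 / r^3)) * p * q
  + r * wS alpha ux r * b * q + r * wS alpha ux r * p * c.

Lemma is_derive_radial_density alpha (v p q : R -> R) (r t a b c : R) : r <> 0 ->
  is_derive v t a -> is_derive p t b -> is_derive q t c ->
  is_derive (fun z => radial_density alpha (v z) (p z) (q z) r) t
            (density_rate alpha (v t) (p t) (q t) r a b c).
Proof.
intros Hr Hv Hp Hq. unfold radial_density, edens, wS.
auto_derive.
- repeat split; eexists; eassumption.
- replace (Derive (fun x => v x) _) with a by (symmetry; apply is_derive_unique; exact Hv).
  replace (Derive (fun x => p x) _) with b by (symmetry; apply is_derive_unique; exact Hp).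
  replace (Derive (fun x => q x) _) with c by (symmetry; apply is_derive_unique; exact Hq).
  unfold density_rate, wS. field. auto.
Qed.

Lemma is_derive_radial_flux alpha (v p q : R -> R) (r a b c : R) : r <> 0 ->
  is_derive v r a -> is_derive p r b -> is_derive q r c ->
  is_derive (fun z => radial_flux alpha (v z) (p z) (q z) z) r
            (flux_rate alpha (v r) (p r) (q r) r a b c).
Proof.
intros Hr Hv Hp Hq. unfold radial_flux, wS.
auto_derive.
- repeat split; try (eexists; eassumption). auto.
- replace (Derive (fun x => v x) _) with a by (symmetry; apply is_derive_unique; exact Hv).
  replace (Derive (fun x => p x) _) with b by (symmetry; apply is_derive_unique; exact Hp).
  replace (Derive (fun x => q x) _) with c by (symmetry; apply is_derive_unique; exact Hq).
  unfold flux_rate, wS. field. auto.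
Qed.

(* The Skyrme equation is exactly the local conservation law
   d/dt (e r) = d/dr (w r u_t u_r); m stands for the mixed derivative u_tr. *)
Lemma local_conservation alpha ux p q r e m f : r <> 0 ->
  skyrme_eq alpha r ux p q e f ->
  density_rate alpha ux p q r p e m = flux_rate alpha ux p q r q m f.
Proof.
intros Hr Heq. unfold skyrme_eq in Heq. rewrite sin_2a in Heq.
set (W := wS alpha ux r) in *.
set (RHS := (1 - alpha ^ 2 * (sin ux) ^ 2 / r ^ 2) * (q / r)
   - 2 * sin ux * cos ux / (2 * r ^ 2) * (alpha ^ 2 * (p ^ 2 - q ^ 2) + 1)).
assert (Hwave : W * (e - f) = RHS) by (unfold RHS; lra).
set (K := r * (alpha^2 * sin ux * cos ux * (p^2+q^2) / r^2 + sin ux * cos ux / r^2) * p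
   - W * p * q - r * (alpha^2 * (2 * sin ux * cos ux * q / r^2 - 2 * (sin ux)^2 / r^3)) * p * q).
assert (Hdiff : density_rate alpha ux p q r p e m - flux_rate alpha ux p q r q m f
                = r * p * (W * (e - f)) + K).
{ unfold density_rate, flux_rate, K. fold W. ring. }
assert (Hcancel : r * p * RHS + K = 0).
{ unfold RHS, K, W, wS. field. auto. }
rewrite Hwave in Hdiff. lra.
Qed.

Lemma sin_sq_le x : (sin x)^2 <= x^2.
Proof.
assert (Hpos : forall y, 0 < y -> (sin y)^2 <= y^2).
{ intros y Hy. pose proof (sin_lt_x y Hy). pose proof (SIN_bound y).
  destruct (Rle_lt_dec 1 y).
  - nra.
  - assert (0 <= sin y) by (apply sin_ge_0; pose proof PI2_1; lra). nra. }
destruct (Rtotal_order x 0) as [Hx|[->|Hx]].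
- replace x with (- (-x)) by ring. rewrite sin_neg. specialize (Hpos (-x)). nra.
- rewrite sin_0. lra.
- auto.
Qed.

(* sin^2 u / r^2 >= 0, also at r = 0 (where x / 0 = 0 for Stdlib's reals). *)
Lemma sin_sq_div_nonneg ux r : 0 <= (sin ux) ^ 2 / r ^ 2.
Proof.
destruct (Req_dec r 0) as [->|Hr].
- unfold Rdiv. rewrite pow_i, Rinv_0 by lia. lra.
- apply Rdiv_le_0_compat. apply pow2_ge_0. apply pow2_gt_0. auto.
Qed.

Lemma wS_ge_1 alpha ux r : 1 <= wS alpha ux r.
Proof.
unfold wS. pose proof (sin_sq_div_nonneg ux r). pose proof (pow2_ge_0 alpha).
unfold Rdiv in *. rewrite Rmult_assoc. nra.
Qed.

Lemma edens_nonneg alpha ux p q r : 0 <= edens alpha ux p q r.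
Proof.
unfold edens. pose proof (wS_ge_1 alpha ux r). pose proof (sin_sq_div_nonneg ux r).
pose proof (pow2_ge_0 p). pose proof (pow2_ge_0 q).
replace (sin ux ^ 2 / (2 * r ^ 2)) with (sin ux ^ 2 / r ^ 2 / 2)
  by (unfold Rdiv; rewrite Rinv_mult; ring).
nra.
Qed.

(* The constant in the O(r) bounds for density and flux near the axis. *)
Definition energy_bound_const alpha K := (1 + alpha^2 * K^2) * K^2 + K^2 / 2.

Lemma energy_bound_const_nonneg alpha K : 0 <= energy_bound_const alpha K.
Proof.
unfold energy_bound_const.
pose proof (pow2_ge_0 K). pose proof (pow2_ge_0 alpha). nra.
Qed.

Lemma sin_sq_div_le ux r K : r <> 0 -> 0 <= K -> Rabs ux <= K * Rabs r ->
  (sin ux)^2 / r^2 <= K^2.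
Proof.
intros Hr HK Hu.
assert (Hs : (sin ux)^2 <= K^2 * r^2).
{ pose proof (sin_sq_le ux). pose proof (Rabs_pos ux).
  assert (ux^2 <= (K * Rabs r)^2) by (rewrite <- (pow2_abs ux); nra).
  rewrite Rpow_mult_distr, pow2_abs in *. lra. }
apply (Rmult_le_reg_r (r^2)). apply pow2_gt_0; auto.
unfold Rdiv. rewrite Rmult_assoc, Rinv_l by (apply pow_nonzero; auto). lra.
Qed.

Lemma density_flux_bound alpha K ux p q r : r <> 0 -> 0 <= K -> Rabs ux <= K * Rabs r ->
  Rabs p <= K -> Rabs q <= K ->
  Rabs (radial_density alpha ux p q r) <= energy_bound_const alpha K * Rabs r /\
  Rabs (radial_flux alpha ux p q r) <= energy_bound_const alpha K * Rabs r.
Proof.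
intros Hr HK Hu Hp Hq.
pose proof (sin_sq_div_le ux r K Hr HK Hu) as Hs.
pose proof (wS_ge_1 alpha ux r) as HW1.
assert (HW : wS alpha ux r <= 1 + alpha^2 * K^2).
{ unfold wS. unfold Rdiv in *. rewrite Rmult_assoc. pose proof (pow2_ge_0 alpha).
  assert (alpha ^ 2 * (sin ux ^ 2 * / r ^ 2) <= alpha^2 * K^2) by (apply Rmult_le_compat_l; lra).
  lra. }
pose proof (Rabs_pos p). pose proof (Rabs_pos q). pose proof (Rabs_pos r).
assert (Hp2 : p^2 <= K^2) by (rewrite <- (pow2_abs p); nra).
assert (Hq2 : q^2 <= K^2) by (rewrite <- (pow2_abs q); nra).
assert (Hpq : Rabs p * Rabs q <= K^2) by nra.
assert (HC : (1 + alpha^2*K^2) * K^2 <= energy_bound_const alpha K)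
  by (unfold energy_bound_const; pose proof (pow2_ge_0 K); lra).
split.
- unfold radial_density. rewrite Rabs_mult. apply Rmult_le_compat_r. apply Rabs_pos.
  rewrite Rabs_pos_eq by apply edens_nonneg.
  unfold edens, energy_bound_const.
  replace (sin ux ^ 2 / (2 * r ^ 2)) with ((sin ux ^ 2 / r ^ 2) / 2) by (field; auto).
  assert (wS alpha ux r * ((p ^ 2 + q ^ 2) / 2) <= (1 + alpha ^ 2 * K ^ 2) * K^2).
  { apply Rmult_le_compat; try lra. pose proof (pow2_ge_0 p); pose proof (pow2_ge_0 q); lra. }
  lra.
- unfold radial_flux. rewrite !Rabs_mult. rewrite (Rabs_pos_eq (wS _ _ _)) by lra.
  assert (wS alpha ux r * (Rabs p * Rabs q) <= energy_bound_const alpha K).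
  { apply Rle_trans with ((1 + alpha^2*K^2) * K^2); auto. apply Rmult_le_compat; nra. }
  nra.
Qed.

(* The outgoing energy through the light cone r = t is nonnegative:
   e r + w r u_t u_r = r (w (u_t + u_r)^2 / 2 + sin^2 u / (2 r^2)). *)
Lemma cone_flux_nonneg alpha ux p q r : 0 < r ->
  0 <= radial_density alpha ux p q r + radial_flux alpha ux p q r.
Proof.
intros Hr. unfold radial_density, radial_flux, edens.
pose proof (wS_ge_1 alpha ux r). pose proof (sin_sq_div_nonneg ux r).
pose proof (pow2_ge_0 (p+q)).
replace ((wS alpha ux r * ((p ^ 2 + q ^ 2) / 2) + sin ux ^ 2 / (2 * r ^ 2)) * r
         + r * wS alpha ux r * p * q)
  with (r * (wS alpha ux r * ((p+q)^2/2) + (sin ux ^ 2 / r ^ 2) / 2)) by (field; lra).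
apply Rmult_le_pos; nra.
Qed.

Lemma locally_iff_ball (x : R) (P : R -> Prop) :
  (exists d, 0 < d /\ forall y, Rabs (y - x) < d -> P y) <-> locally x P.
Proof.
split.
- intros [d [Hd H]]. exists (mkposreal d Hd). intros y Hy. apply H. exact Hy.
- intros [d H]. exists d. split. apply cond_pos. intros y Hy. apply H. exact Hy.
Qed.

Lemma open2_locally (U : R -> R -> Prop) x y : open2 U -> U x y -> locally_2d U x y.
Proof.
intros HU Hxy. destruct (HU x y Hxy) as [d [Hd H]]. exists (mkposreal d Hd). exact H.
Qed.

Lemma locally_2d_weaken (P Q : R -> R -> Prop) x y :
  (forall u v, P u v -> Q u v) -> locally_2d P x y -> locally_2d Q x y.
Proof. intros H. apply locally_2d_impl, locally_2d_forall. exact H. Qed.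

Lemma locally_2d_on (U P : R -> R -> Prop) x y : open2 U -> U x y ->
  (forall u v, U u v -> P u v) -> locally_2d P x y.
Proof. intros HU Hxy H. apply (locally_2d_weaken U); auto. apply open2_locally; auto. Qed.

Lemma cont2_on_pt (U : R -> R -> Prop) f x y : cont2_on U f -> U x y -> continuity_2d_pt f x y.
Proof.
intros Hc Hxy eps. destruct (Hc x y Hxy eps (cond_pos eps)) as [d [Hd H]].
exists (mkposreal d Hd). exact H.
Qed.

Lemma continuity_2d_pt_section f x y : continuity_2d_pt f x y -> continuity_pt (fun v => f x v) y.
Proof.
intros Hc. apply continuity_pt_locally. intros eps.
exact (locally_2d_1d_const_x _ _ _ (Hc eps)).
Qed.

Lemma continuity_2d_pt_ext_on (U : R -> R -> Prop) f g x y : open2 U -> U x y ->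
  (forall a b, U a b -> f a b = g a b) -> continuity_2d_pt f x y -> continuity_2d_pt g x y.
Proof.
intros HU Hxy Heq. apply continuity_2d_pt_ext_loc. apply (locally_2d_on U); auto.
Qed.

Lemma is_derive_ext_on_t (U : R -> R -> Prop) (f g : R -> R -> R) (t r l : R) :
  open2 U -> U t r -> (forall a b, U a b -> f a b = g a b) ->
  is_derive (fun z => f z r) t l -> is_derive (fun z => g z r) t l.
Proof.
intros HU Ht Heq. apply is_derive_ext_loc.
apply (locally_2d_1d_const_y (fun a b => f a b = g a b)). apply (locally_2d_on U); auto.
Qed.

Lemma is_derive_ext_on_r (U : R -> R -> Prop) (f g : R -> R -> R) (t r l : R) :
  open2 U -> U t r -> (forall a b, U a b -> f a b = g a b) ->
  is_derive (fun z => f t z) r l -> is_derive (fun z => g t z) r l.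
Proof.
intros HU Ht Heq. apply is_derive_ext_loc.
apply (locally_2d_1d_const_x (fun a b => f a b = g a b)). apply (locally_2d_on U); auto.
Qed.

(* Equality of mixed partial derivatives on an open set (Schwarz), phrased
   with given partial derivatives instead of Coquelicot's [Derive]. *)
Lemma schwarz_on (U : R -> R -> Prop) (f ft fr ftr frt : R -> R -> R) : open2 U ->
  (forall t r, U t r -> is_derive (fun z => f z r) t (ft t r)) ->
  (forall t r, U t r -> is_derive (fun z => f t z) r (fr t r)) ->
  (forall t r, U t r -> is_derive (fun z => ft t z) r (ftr t r)) ->
  (forall t r, U t r -> is_derive (fun z => fr z r) t (frt t r)) ->
  (forall t r, U t r -> continuity_2d_pt ftr t r) ->
  (forall t r, U t r -> continuity_2d_pt frt t r) ->
  forall t r, U t r -> frt t r = ftr t r.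
Proof.
intros HU Dt Dr Dtr Drt Ctr Crt.
assert (Drt' : forall a b, U a b -> is_derive (fun z => Derive (fun s => f z s) b) a (frt a b)).
{ intros a b Hab. apply (is_derive_ext_on_t U fr (fun x y => Derive (fun s => f x s) y)); auto.
  intros x y Hxy. symmetry. apply is_derive_unique; auto. }
assert (Dtr' : forall a b, U a b -> is_derive (fun z => Derive (fun s => f s z) a) b (ftr a b)).
{ intros a b Hab. apply (is_derive_ext_on_r U ft (fun x y => Derive (fun s => f s y) x)); auto.
  intros x y Hxy. symmetry. apply is_derive_unique; auto. }
intros t r Htr.
rewrite <- (is_derive_unique _ _ _ (Drt' t r Htr)), <- (is_derive_unique _ _ _ (Dtr' t r Htr)).
apply Schwarz.
- apply (locally_2d_on U); auto. intros a b Hab.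
  split; [|split; [|split]]; eexists; [apply Dt | apply Dr | apply Drt' | apply Dtr']; auto.
- apply (continuity_2d_pt_ext_on U frt); auto.
  intros a b Hab. symmetry. apply is_derive_unique; auto.
- apply (continuity_2d_pt_ext_on U ftr); auto.
  intros a b Hab. symmetry. apply is_derive_unique; auto.
Qed.

Set Implicit Arguments.
Record regular_solution (U : R -> R -> Prop) (u ut ur utt urr urt : R -> R -> R) : Prop := {
  cont_u : forall t r, U t r -> continuity_2d_pt u t r;
  cont_ut : forall t r, U t r -> continuity_2d_pt ut t r;
  cont_ur : forall t r, U t r -> continuity_2d_pt ur t r;
  cont_utt : forall t r, U t r -> continuity_2d_pt utt t r;
  cont_urr : forall t r, U t r -> continuity_2d_pt urr t r;
  cont_urt : forall t r, U t r -> continuity_2d_pt urt t r;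
  der_ut : forall t r, U t r -> is_derive (fun z => u z r) t (ut t r);
  der_ur : forall t r, U t r -> is_derive (fun z => u t z) r (ur t r);
  der_utt : forall t r, U t r -> is_derive (fun z => ut z r) t (utt t r);
  der_urr : forall t r, U t r -> is_derive (fun z => ur t z) r (urr t r);
  der_urt : forall t r, U t r -> is_derive (fun z => ur z r) t (urt t r);
  der_utr : forall t r, U t r -> is_derive (fun z => ut t z) r (urt t r) }.
Unset Implicit Arguments.

(* A smooth u with the given first and second derivatives is regular; the mixed
   derivative is provided by the C^2 structure and is symmetric by Schwarz. *)
Lemma smooth_regular (U : R -> R -> Prop) (u ut ur utt urr : R -> R -> R) :
  open2 U -> smooth_on U u ->
  (forall t r, U t r -> derivable_pt_lim (fun s => u s r) t (ut t r)) ->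
  (forall t r, U t r -> derivable_pt_lim (fun s => u t s) r (ur t r)) ->
  (forall t r, U t r -> derivable_pt_lim (fun s => ut s r) t (utt t r)) ->
  (forall t r, U t r -> derivable_pt_lim (fun s => ur t s) r (urr t r)) ->
  exists urt, regular_solution U u ut ur utt urr urt.
Proof.
intros HU Hsm Hut Hur Hutt Hurr.
destruct (Hsm 2%nat) as [Hcu [ft [fr [Hd [Hft Hfr]]]]].
destruct Hft as [Hcft [ftt [ftr [Hdft [Hcftt Hcftr]]]]].
destruct Hfr as [Hcfr [frt [frr [Hdfr [Hcfrt Hcfrr]]]]].
simpl in Hcftt, Hcftr, Hcfrt, Hcfrr.
assert (Et : forall a b, U a b -> ft a b = ut a b).
{ intros a b Hab. eapply uniqueness_limite. apply (proj1 (Hd a b Hab)). auto. }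
assert (Er : forall a b, U a b -> fr a b = ur a b).
{ intros a b Hab. eapply uniqueness_limite. apply (proj2 (Hd a b Hab)). auto. }
assert (Dut_t : forall a b, U a b -> is_derive (fun z => ut z b) a (ftt a b)).
{ intros a b Hab. apply (is_derive_ext_on_t U ft ut); auto. apply is_derive_Reals, (Hdft a b Hab). }
assert (Dut_r : forall a b, U a b -> is_derive (fun z => ut a z) b (ftr a b)).
{ intros a b Hab. apply (is_derive_ext_on_r U ft ut); auto. apply is_derive_Reals, (Hdft a b Hab). }
assert (Dur_t : forall a b, U a b -> is_derive (fun z => ur z b) a (frt a b)).
{ intros a b Hab. apply (is_derive_ext_on_t U fr ur); auto. apply is_derive_Reals, (Hdfr a b Hab). }
assert (Dur_r : forall a b, U a b -> is_derive (fun z => ur a z) b (frr a b)).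
{ intros a b Hab. apply (is_derive_ext_on_r U fr ur); auto. apply is_derive_Reals, (Hdfr a b Hab). }
assert (Ett : forall a b, U a b -> ftt a b = utt a b).
{ intros a b Hab. eapply uniqueness_limite. apply is_derive_Reals, Dut_t; auto. auto. }
assert (Err : forall a b, U a b -> frr a b = urr a b).
{ intros a b Hab. eapply uniqueness_limite. apply is_derive_Reals, Dur_r; auto. auto. }
assert (Hmixed : forall a b, U a b -> frt a b = ftr a b).
{ apply (schwarz_on U u ut ur); auto; intros a b Hab.
  - apply is_derive_Reals. auto.
  - apply is_derive_Reals. auto.
  - apply (cont2_on_pt U); auto.
  - apply (cont2_on_pt U); auto. }
exists frt. constructor; intros t r Htr.
- apply (cont2_on_pt U); auto.
- apply (continuity_2d_pt_ext_on U ft); auto. apply (cont2_on_pt U); auto.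
- apply (continuity_2d_pt_ext_on U fr); auto. apply (cont2_on_pt U); auto.
- apply (continuity_2d_pt_ext_on U ftt); auto. apply (cont2_on_pt U); auto.
- apply (continuity_2d_pt_ext_on U frr); auto. apply (cont2_on_pt U); auto.
- apply (cont2_on_pt U); auto.
- apply is_derive_Reals. auto.
- apply is_derive_Reals. auto.
- apply is_derive_Reals. auto.
- apply is_derive_Reals. auto.
- auto.
- rewrite Hmixed by auto. auto.
Qed.

(* A function continuous on a closed rectangle is bounded there: by uniform
   continuity, walk from the corner (a,c) in steps of length de/2. *)
Lemma continuous_rectangle_bounded (f : R -> R -> R) a b c d : a <= b -> c <= d ->
  (forall x y, a <= x <= b -> c <= y <= d -> continuity_2d_pt f x y) ->
  exists M, forall x y, a <= x <= b -> c <= y <= d -> Rabs (f x y) <= M.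
Proof.
intros Hab Hcd Hc.
destruct (uniform_continuity_2d f a b c d Hc (mkposreal 1 Rlt_0_1)) as [de Hde].
simpl in Hde. pose proof (cond_pos de) as Hdp.
assert (Hsteps : forall n : nat, forall x y, a <= x <= b -> c <= y <= d ->
  (x - a) + (y - c) <= INR n * (de / 2) -> Rabs (f x y) <= Rabs (f a c) + INR n).
{ induction n as [|n IH]; intros x y Hx Hy Hs.
  - simpl in Hs. assert (x = a) by lra. assert (y = c) by lra. subst. simpl. lra.
  - rewrite S_INR in Hs |- *.
    destruct (Rle_lt_dec (de/2) (x - a)) as [H1|H1].
    + assert (Hn : Rabs (f (x - de/2) y) <= Rabs (f a c) + INR n) by (apply IH; lra).
      assert (Hu : Rabs (f x y - f (x - de/2) y) < 1).
      { apply Hde; try lra. rewrite Rabs_pos_eq; lra. rewrite Rminus_diag, Rabs_R0. lra. }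
      pose proof (Rabs_triang_inv (f x y) (f (x - de/2) y)). lra.
    + set (y' := Rmax c (y - de/2)).
      assert (Hy1 : c <= y') by apply Rmax_l.
      assert (Hy2 : y' <= y) by (apply Rmax_lub; lra).
      assert (Hy3 : y' - c <= INR n * (de/2)).
      { unfold y'. apply Rmax_case_strong; intros; try lra. pose proof (pos_INR n). nra. }
      assert (Hn : Rabs (f a y') <= Rabs (f a c) + INR n) by (apply IH; lra).
      assert (Hu : Rabs (f x y - f a y') < 1).
      { apply Hde; try lra. rewrite Rabs_pos_eq; lra. rewrite Rabs_pos_eq. 2: lra.
        unfold y'. apply Rmax_case_strong; intros; lra. }
      pose proof (Rabs_triang_inv (f x y) (f a y')). lra. }
destruct (INR_unbounded ((b - a + (d - c)) / (de / 2))) as [n Hn].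
exists (Rabs (f a c) + INR n). intros x y Hx Hy. apply Hsteps; auto.
apply Rle_trans with (b - a + (d - c)). lra.
apply Rlt_le. apply (Rmult_lt_reg_r (/ (de/2))). apply Rinv_0_lt_compat; lra.
rewrite Rmult_assoc, Rinv_r by lra. rewrite Rmult_1_r. exact Hn.
Qed.

Lemma open2_tube (U : R -> R -> Prop) x a b : open2 U ->
  (forall r, a <= r <= b -> U x r) ->
  exists eta, 0 < eta /\ forall y r, Rabs (y - x) < eta -> a <= r <= b -> U y r.
Proof.
intros HU Hs.
assert (Hd : forall r, {d : posreal | a <= r <= b ->
            forall y s, Rabs (y - x) < d -> Rabs (s - r) < d -> U y s}).
{ intro r. apply constructive_indefinite_description. destruct (classic (a<=r<=b)) as [h|h].
  - destruct (HU x r (Hs r h)) as [d [Hd H']]. exists (mkposreal d Hd). intros _. auto.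
  - exists (mkposreal 1 Rlt_0_1). intros; contradiction. }
destruct (compactness_value_1d a b (fun r => proj1_sig (Hd r))) as [d Hd'].
exists d. split. apply cond_pos. intros y r Hy Hr. apply NNPP. intro Hn.
apply (Hd' r Hr). intros [t [Ht [H1 H2]]]. apply Hn.
apply (proj2_sig (Hd t) Ht). lra. exact H1.
Qed.

Lemma vanishing_lipschitz (h dh : R -> R) r K :
  (forall s, Rmin 0 r <= s <= Rmax 0 r -> is_derive h s (dh s) /\ Rabs (dh s) <= K) ->
  h 0 = 0 -> Rabs (h r) <= K * Rabs r.
Proof.
intros Hd H0.
destruct (MVT_gen h 0 r dh) as [c [Hc He]].
- intros x Hx. apply Hd. lra.
- intros x Hx. apply derivable_continuous_pt. exists (dh x).
  apply is_derive_Reals. apply (proj1 (Hd x Hx)).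
- rewrite H0, !Rminus_0_r in He. rewrite He, Rabs_mult.
  apply Rmult_le_compat_r. apply Rabs_pos. apply (proj2 (Hd c Hc)).
Qed.

Lemma continuity_2d_pt_pow f x y n :
  continuity_2d_pt f x y -> continuity_2d_pt (fun a b => f a b ^ n) x y.
Proof.
intros H. induction n as [|n IH]; simpl.
- apply continuity_2d_pt_const.
- apply continuity_2d_pt_mult; auto.
Qed.

Ltac solve_continuity_2d :=
  repeat first
  [ apply continuity_2d_pt_const
  | apply continuity_2d_pt_id2
  | assumption
  | apply continuity_2d_pt_plus
  | apply continuity_2d_pt_minus
  | apply continuity_2d_pt_mult
  | apply continuity_2d_pt_opp
  | apply continuity_2d_pt_pow
  | apply (continuity_1d_2d_pt_comp sin); [apply continuity_sin|]
  | apply (continuity_1d_2d_pt_comp cos); [apply continuity_cos|]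
  | apply continuity_2d_pt_inv ].

Lemma continuity_pt_0_of_linear_bound (h : R -> R) rho C : 0 < rho -> 0 <= C ->
  (forall v, Rabs v < rho -> Rabs (h v) <= C * Rabs v) -> continuity_pt h 0.
Proof.
intros Hrho HC Hb. apply continuity_pt_locally. intros eps. apply locally_iff_ball.
pose proof (cond_pos eps) as Heps.
assert (Hh0 : h 0 = 0).
{ specialize (Hb 0). rewrite Rabs_R0, Rmult_0_r in Hb.
  apply Rabs_eq_0, Rle_antisym. apply Hb. lra. apply Rabs_pos. }
set (d := Rmin rho (eps / (C + 1))).
assert (Hd : 0 < d) by (apply Rmin_pos; [lra|apply Rdiv_lt_0_compat; lra]).
assert (Hd1 : d <= rho) by apply Rmin_l.
assert (Hd2 : d <= eps / (C + 1)) by apply Rmin_r.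
exists d. split; auto. intros v Hv. rewrite Rminus_0_r in Hv. rewrite Hh0, Rminus_0_r.
assert (Hv1 : Rabs v < rho) by lra.
assert (Hv2 : Rabs v * (C + 1) < eps).
{ assert (Rabs v < eps / (C + 1)) by lra.
  assert (Rabs v * (C + 1) < eps / (C + 1) * (C + 1)) by (apply Rmult_lt_compat_r; lra).
  assert (eps / (C + 1) * (C + 1) = eps) by (field; lra). lra. }
pose proof (Hb v Hv1). pose proof (Rabs_pos v). nra.
Qed.

Lemma nonneg_of_small_defect a B T1 : 0 < T1 -> 0 <= B ->
  (forall de, 0 < de < T1 -> - de * B <= a) -> 0 <= a.
Proof.
intros HT HB H. apply Rnot_lt_le. intros Ha.
set (de := Rmin (T1/2) (- a / (2 * (B + 1)))).
assert (Hd1 : de <= T1/2) by apply Rmin_l.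
assert (Hd2 : de <= - a / (2 * (B + 1))) by apply Rmin_r.
assert (Hd0 : 0 < de) by (apply Rmin_pos; [lra| apply Rdiv_lt_0_compat; lra]).
specialize (H de ltac:(lra)).
assert (de * (2 * (B + 1)) <= - a).
{ apply Rle_trans with (- a / (2 * (B + 1)) * (2 * (B + 1))). apply Rmult_le_compat_r; lra.
  right. field. lra. }
nra.
Qed.

Section MonotoneAverage.
Variables (T0 : R) (f : R -> R).
Hypothesis HT0 : 0 < T0.
Hypothesis Hmono : forall a b, 0 < a -> a <= b -> b <= T0 -> f a <= f b.
Hypothesis Hcont : forall x, 0 < x <= T0 -> forall eps, 0 < eps -> exists d, 0 < d /\
  forall t, Rabs (t - x) < d -> 0 < t <= T0 -> Rabs (f t - f x) < eps.

Lemma nondecreasing_limit_right0 (m : R) : (forall t, 0 < t <= T0 -> m <= f t) ->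
  exists L, (forall t, 0 < t <= T0 -> L <= f t) /\ lim_right0 T0 f L.
Proof.
intros Hm.
set (A := fun y => exists t, 0 < t <= T0 /\ y = - f t).
destruct (completeness A) as [s [Hub Hlub]].
{ exists (- m). intros y [t [Ht ->]]. specialize (Hm t Ht). lra. }
{ exists (- f T0). exists T0. split; auto. lra. }
assert (Hlow : forall t, 0 < t <= T0 -> - s <= f t).
{ intros t Ht. assert (- f t <= s) by (apply Hub; exists t; auto). lra. }
exists (- s). split; auto.
intros eps Heps.
assert (Happrox : exists ts, 0 < ts <= T0 /\ f ts < - s + eps).
{ apply NNPP. intro Hn.
  assert (s <= s - eps); [|lra].
  apply Hlub. intros y [t [Ht ->]]. apply Rnot_lt_le. intro Hc. apply Hn. exists t.
  split; auto. lra. }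
destruct Happrox as [ts [Hts Hfts]].
exists ts. split. lra. intros T HT HTd HT0'.
pose proof (Hlow T ltac:(lra)). pose proof (Hmono T ts ltac:(lra) ltac:(lra) ltac:(lra)).
rewrite Rabs_pos_eq; lra.
Qed.

Variable L : R.
Hypothesis HL : forall t, 0 < t <= T0 -> L <= f t.
Hypothesis Hlim : lim_right0 T0 f L.

Definition extend_by_limit (T : R) : R :=
  if Rle_dec T 0 then L else if Rle_dec T T0 then f T else f T0.

Lemma extend_by_limit_eq T : 0 < T <= T0 -> extend_by_limit T = f T.
Proof.
intros HT. unfold extend_by_limit.
destruct (Rle_dec T 0); [lra|]. destruct (Rle_dec T T0); [auto|lra].
Qed.

Lemma extend_by_limit_lim : lim_right0 T0 extend_by_limit L.
Proof.
intros eps Heps. destruct (Hlim eps Heps) as [d [Hd Hd']].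
exists d. split; auto. intros T HT HTd HT0'. rewrite extend_by_limit_eq by lra. auto.
Qed.

Lemma extend_by_limit_continuous s : 0 <= s <= T0 -> continuity_pt extend_by_limit s.
Proof.
intros Hs. apply continuity_pt_locally. intros eps. apply locally_iff_ball.
pose proof (cond_pos eps) as Heps.
destruct (Req_dec s 0) as [->|Hs0].
- destruct (Hlim eps Heps) as [d [Hd Hd']].
  exists (Rmin d T0). split. apply Rmin_pos; lra.
  intros v Hv. rewrite Rminus_0_r in Hv. apply Rabs_def2 in Hv.
  pose proof (Rmin_l d T0). pose proof (Rmin_r d T0).
  unfold extend_by_limit. destruct (Rle_dec 0 0); [|lra].
  destruct (Rle_dec v 0). rewrite Rminus_diag, Rabs_R0. lra.
  destruct (Rle_dec v T0); [apply Hd'|]; lra.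
- destruct (Hcont s ltac:(lra) eps Heps) as [d [Hd Hd']].
  exists (Rmin d (s/2)). split. apply Rmin_pos; lra.
  intros v Hv. pose proof (Rmin_l d (s/2)). pose proof (Rmin_r d (s/2)).
  rewrite (extend_by_limit_eq s) by lra. apply Rabs_def2 in Hv.
  unfold extend_by_limit. destruct (Rle_dec v 0). lra.
  destruct (Rle_dec v T0); apply Hd'; try (apply Rabs_def1); lra.
Qed.

Lemma extend_by_limit_integrable T : 0 < T <= T0 -> Riemann_integrable extend_by_limit 0 T.
Proof.
intros HT. apply continuity_implies_RiemannInt. lra.
intros x Hx. apply extend_by_limit_continuous. lra.
Qed.

(* The mean value of f over [0,T] lies between L and f T, hence tends to L. *)
Lemma average_limit_right0 :
  lim_right0 T0 (fun T => RInt extend_by_limit 0 T / T) L.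
Proof.
intros eps Heps. destruct (Hlim eps Heps) as [d [Hd Hd']].
exists d. split; auto. intros T HT HTd HT0'.
specialize (Hd' T HT HTd HT0').
pose proof (extend_by_limit_integrable T ltac:(lra)) as Hint.
rewrite (RInt_Reals _ _ _ Hint).
destruct (RiemannInt_const_bound (l:=L) (u:=f T) Hint ltac:(lra)) as [Hb1 Hb2].
{ intros x Hx. rewrite extend_by_limit_eq by lra.
  split. apply HL; lra. apply Hmono; lra. }
set (I := RiemannInt Hint) in *.
assert (L <= I / T <= f T).
{ split; apply (Rmult_le_reg_r T); try lra;
  unfold Rdiv; rewrite Rmult_assoc, Rinv_l by lra; lra. }
apply Rabs_def2 in Hd'. rewrite Rabs_pos_eq; lra.
Qed.

End MonotoneAverage.

Section SkyrmeEnergy.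
Variables (alpha T0 : R) (U : R -> R -> Prop) (u ut ur utt urr urt : R -> R -> R).
Hypothesis HU : open2 U.
Hypothesis Hreg : regular_solution U u ut ur utt urr urt.
Hypothesis HO : forall t r, Omega T0 t r -> U t r.
Hypothesis Heq : forall t r, Omega T0 t r -> 0 < r ->
  skyrme_eq alpha r (u t r) (ut t r) (ur t r) (utt t r) (urr t r).
Hypothesis Hbc : forall t, 0 < t <= T0 -> u t 0 = 0.

Definition dens t r := radial_density alpha (u t r) (ut t r) (ur t r) r.
Definition flux t r := radial_flux alpha (u t r) (ut t r) (ur t r) r.
Definition dens_t t r := density_rate alpha (u t r) (ut t r) (ur t r) r (ut t r) (utt t r) (urt t r).
Definition flux_r t r := flux_rate alpha (u t r) (ut t r) (ur t r) r (ur t r) (urt t r) (urr t r).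

Lemma dens_derive_t t r : U t r -> r <> 0 -> is_derive (fun z => dens z r) t (dens_t t r).
Proof.
intros Htr Hr.
apply (is_derive_radial_density alpha (fun z => u z r) (fun z => ut z r) (fun z => ur z r)); auto.
- apply (der_ut Hreg); auto.
- apply (der_utt Hreg); auto.
- apply (der_urt Hreg); auto.
Qed.

Lemma flux_derive_r t r : U t r -> r <> 0 -> is_derive (fun z => flux t z) r (flux_r t r).
Proof.
intros Htr Hr.
apply (is_derive_radial_flux alpha (fun z => u t z) (fun z => ut t z) (fun z => ur t z)); auto.
- apply (der_ur Hreg); auto.
- apply (der_utr Hreg); auto.
- apply (der_urr Hreg); auto.
Qed.

Lemma dens_continuous t r : U t r -> r <> 0 -> continuity_2d_pt dens t r.
Proof.
intros Htr Hr.
pose proof (cont_u Hreg t r Htr). pose proof (cont_ut Hreg t r Htr).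
pose proof (cont_ur Hreg t r Htr).
unfold dens, radial_density, edens, wS, Rdiv. solve_continuity_2d.
all: try (apply pow_nonzero; auto).
apply Rmult_integral_contrapositive; split; [lra|apply pow_nonzero; auto].
Qed.

Lemma dens_t_continuous t r : U t r -> r <> 0 -> continuity_2d_pt dens_t t r.
Proof.
intros Htr Hr.
pose proof (cont_u Hreg t r Htr). pose proof (cont_ut Hreg t r Htr).
pose proof (cont_ur Hreg t r Htr). pose proof (cont_utt Hreg t r Htr).
pose proof (cont_urt Hreg t r Htr).
unfold dens_t, density_rate, wS, Rdiv. solve_continuity_2d.
all: try (apply pow_nonzero; auto).
Qed.

Lemma flux_r_continuous t r : U t r -> r <> 0 -> continuity_2d_pt flux_r t r.
Proof.
intros Htr Hr.
pose proof (cont_u Hreg t r Htr). pose proof (cont_ut Hreg t r Htr).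
pose proof (cont_ur Hreg t r Htr). pose proof (cont_urr Hreg t r Htr).
pose proof (cont_urt Hreg t r Htr).
unfold flux_r, flux_rate, wS, Rdiv. solve_continuity_2d.
all: try (apply pow_nonzero; auto).
Qed.

Lemma conservation_law t r : Omega T0 t r -> 0 < r -> dens_t t r = flux_r t r.
Proof.
intros Ho Hr. apply local_conservation; [lra | auto].
Qed.

Lemma locally_off_axis t r : U t r -> r <> 0 -> locally_2d (fun a b => U a b /\ b <> 0) t r.
Proof.
intros Htr Hr. apply locally_2d_and. apply open2_locally; auto.
apply (continuity_2d_pt_neq_0 (fun _ b => b)); auto. apply continuity_2d_pt_id2.
Qed.

(* The t-derivative of the density, in the form required by the Leibniz rule. *)
Lemma Derive_dens_continuous t r : U t r -> r <> 0 ->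
  continuity_2d_pt (fun a b => Derive (fun z => dens z b) a) t r.
Proof.
intros Htr Hr. apply continuity_2d_pt_ext_loc with dens_t. 2: apply dens_t_continuous; auto.
apply (locally_2d_weaken (fun a b => U a b /\ b <> 0)). 2: apply locally_off_axis; auto.
intros a b [Hab Hb]. symmetry. apply is_derive_unique. apply dens_derive_t; auto.
Qed.

Lemma Derive_dens_continuous_near t r : U t r -> r <> 0 ->
  locally_2d (fun x y => continuity_2d_pt (fun a b => Derive (fun z => dens z b) a) x y) t r.
Proof.
intros Htr Hr. apply (locally_2d_weaken (fun a b => U a b /\ b <> 0)).
- intros a b [Hab Hb]. apply Derive_dens_continuous; auto.
- apply locally_off_axis; auto.
Qed.

Lemma dens_continuous_r t r : U t r -> r <> 0 -> continuity_pt (fun v => dens t v) r.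
Proof. intros. apply continuity_2d_pt_section, dens_continuous; auto. Qed.

(* Near the axis, |dens|, |flux| <= C r as soon as u(t,0) = 0 and the first
   derivatives are bounded by K: u = O(r) by the mean value theorem. *)
Lemma dens_flux_bound_along t v K :
  (forall s, Rmin 0 v <= s <= Rmax 0 v -> U t s /\ Rabs (ur t s) <= K) ->
  Rabs (ut t v) <= K -> u t 0 = 0 -> v <> 0 -> 0 <= K ->
  Rabs (dens t v) <= energy_bound_const alpha K * Rabs v /\
  Rabs (flux t v) <= energy_bound_const alpha K * Rabs v.
Proof.
intros Hs Hut Hu0 Hv HK.
assert (Hu : Rabs (u t v) <= K * Rabs v).
{ apply (vanishing_lipschitz (fun z => u t z) (fun z => ur t z)); auto.
  intros s Hs'. destruct (Hs s Hs') as [Hts Hb]. split; auto. apply (der_ur Hreg); auto. }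
assert (Hr : Rabs (ur t v) <= K) by (apply (Hs v); split; [apply Rmin_r | apply Rmax_r]).
apply density_flux_bound; auto.
Qed.

(* On the axis the density vanishes and, as it is O(r) there, it is continuous:
   u_t and u_r are bounded near (t,0) by continuity. *)
Lemma dens_axis_continuous t : U t 0 -> u t 0 = 0 -> continuity_pt (fun v => dens t v) 0.
Proof.
intros Ht0 Hu0.
destruct (HU t 0 Ht0) as [r0 [Hr0 Hbox]].
pose proof (continuity_2d_pt_section _ _ _ (cont_ur Hreg t 0 Ht0)) as Cur.
pose proof (continuity_2d_pt_section _ _ _ (cont_ut Hreg t 0 Ht0)) as Cut.
destruct (proj2 (locally_iff_ball _ _) (proj1 (continuity_pt_locally _ _) Cur (mkposreal 1 Rlt_0_1)))
  as [r1 [Hr1 H1]].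
destruct (proj2 (locally_iff_ball _ _) (proj1 (continuity_pt_locally _ _) Cut (mkposreal 1 Rlt_0_1)))
  as [r2 [Hr2 H2]].
simpl in H1, H2.
set (K := Rabs (ur t 0) + Rabs (ut t 0) + 1).
pose proof (Rabs_pos (ur t 0)). pose proof (Rabs_pos (ut t 0)).
set (rho := Rmin r0 (Rmin r1 r2)).
assert (Hrho : 0 < rho) by (unfold rho; repeat apply Rmin_pos; auto).
assert (Hrho0 : rho <= r0) by (unfold rho; apply Rmin_l).
assert (Hrho1 : rho <= r1) by (unfold rho; eapply Rle_trans; [apply Rmin_r|apply Rmin_l]).
assert (Hrho2 : rho <= r2) by (unfold rho; eapply Rle_trans; [apply Rmin_r|apply Rmin_r]).
apply (continuity_pt_0_of_linear_bound _ rho (energy_bound_const alpha K)); auto.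
{ apply energy_bound_const_nonneg. }
intros v Hv. destruct (Req_dec v 0) as [->|Hv0].
{ unfold dens, radial_density. rewrite Rmult_0_r, !Rabs_R0. lra. }
refine (proj1 (dens_flux_bound_along t v K _ _ Hu0 Hv0 _)); [| |unfold K; lra].
- intros s Hs. assert (Hs' : Rabs s <= Rabs v).
  { unfold Rmin, Rmax in Hs. destruct (Rle_dec 0 v); unfold Rabs; repeat destruct Rcase_abs; lra. }
  split.
  + apply Hbox. rewrite Rminus_diag, Rabs_R0. auto. rewrite Rminus_0_r. lra.
  + assert (Rabs (ur t s - ur t 0) < 1) by (apply H1; rewrite Rminus_0_r; lra).
    pose proof (Rabs_triang_inv (ur t s) (ur t 0)). unfold K. lra.
- assert (Rabs (ut t v - ut t 0) < 1) by (apply H2; rewrite Rminus_0_r; lra).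
  pose proof (Rabs_triang_inv (ut t v) (ut t 0)). unfold K. lra.
Qed.

Lemma dens_integrable T : 0 < T <= T0 -> ex_RInt (fun v => dens T v) 0 T.
Proof.
intros HT. apply (ex_RInt_continuous (V:=R_CompleteNormedModule)). intros z Hz.
rewrite Rmin_left, Rmax_right in Hz by lra.
apply continuity_pt_filterlim.
assert (HTz : U T z) by (apply HO; unfold Omega; lra).
destruct (Req_dec z 0) as [->|Hz0].
- apply dens_axis_continuous; [exact HTz | apply Hbc; lra].
- apply dens_continuous_r; [exact HTz | exact Hz0].
Qed.

Definition energy T := RInt (fun v => dens T v) 0 T.
Definition energy_from de T := RInt (fun v => dens T v) de T.

Lemma energy_nonneg T : 0 < T <= T0 -> 0 <= energy T.
Proof.
intros HT. unfold energy. apply (RInt_ge_0 (fun v => dens T v) 0 T). lra. exact (dens_integrable T HT).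
intros v Hv. unfold dens, radial_density. apply Rmult_le_pos. apply edens_nonneg. lra.
Qed.

Lemma energy_split de T : 0 < de < T -> T <= T0 ->
  energy T = RInt (fun v => dens T v) 0 de + energy_from de T.
Proof.
intros Hd HT. unfold energy, energy_from.
pose proof (dens_integrable T ltac:(lra)) as Hi.
symmetry. apply (RInt_Chasles (V:=R_CompleteNormedModule)).
- apply (ex_RInt_Chasles_1 (V:=R_CompleteNormedModule)) with T; auto; lra.
- apply (ex_RInt_Chasles_2 (V:=R_CompleteNormedModule)) with 0; auto; lra.
Qed.

Lemma near_axis_bound T1 T2 : 0 < T1 <= T2 -> T2 <= T0 ->
  exists C, 0 <= C /\ forall t v, T1 <= t <= T2 -> 0 < v <= T1 ->
    Rabs (dens t v) <= C * v /\ Rabs (flux t v) <= C * v.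
Proof.
intros HT HT2.
assert (HOm : forall t r, T1 <= t <= T2 -> 0 <= r <= T1 -> U t r).
{ intros t r Ht Hr. apply HO. unfold Omega; lra. }
destruct (continuous_rectangle_bounded ur T1 T2 0 T1) as [M1 HM1]; try lra.
{ intros x y Hx Hy. apply (cont_ur Hreg); auto. }
destruct (continuous_rectangle_bounded ut T1 T2 0 T1) as [M2 HM2]; try lra.
{ intros x y Hx Hy. apply (cont_ut Hreg); auto. }
set (K := Rabs M1 + Rabs M2).
pose proof (Rle_abs M1). pose proof (Rle_abs M2). pose proof (Rabs_pos M1). pose proof (Rabs_pos M2).
exists (energy_bound_const alpha K). split. apply energy_bound_const_nonneg.
intros t v Ht Hv.
assert (Hb : Rabs (dens t v) <= energy_bound_const alpha K * Rabs v /\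
             Rabs (flux t v) <= energy_bound_const alpha K * Rabs v).
{ apply dens_flux_bound_along; try (unfold K; lra).
  - intros s Hs. rewrite Rmin_left, Rmax_right in Hs by lra. split. apply HOm; lra.
    pose proof (HM1 t s Ht ltac:(lra)). unfold K. lra.
  - pose proof (HM2 t v Ht ltac:(lra)). unfold K. lra.
  - apply Hbc. lra. }
rewrite (Rabs_pos_eq v) in Hb by lra. exact Hb.
Qed.

Lemma inner_energy_small C T1 T2 t de : 0 < T1 <= T2 -> T2 <= T0 -> 0 <= C ->
  (forall t v, T1 <= t <= T2 -> 0 < v <= T1 -> Rabs (dens t v) <= C * v /\ Rabs (flux t v) <= C * v) ->
  T1 <= t <= T2 -> 0 < de < T1 ->
  Rabs (RInt (fun v => dens t v) 0 de) <= de * (C * de).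
Proof.
intros HT HT2 HC HB Ht Hd.
replace (de * (C * de)) with ((de - 0) * (C * de)) by ring.
apply abs_RInt_le_const. lra.
- apply (ex_RInt_Chasles_1 (V:=R_CompleteNormedModule)) with t. lra.
  apply dens_integrable; lra.
- intros v Hv. destruct (Req_dec v 0) as [->|Hv0].
  + unfold dens, radial_density. rewrite Rmult_0_r, Rabs_R0. nra.
  + apply Rle_trans with (C * v). apply (HB t v); auto. lra. nra.
Qed.

Lemma strip_beyond_cone de x : 0 < de < x -> x <= T0 ->
  exists eta, 0 < eta /\ forall y v, Rabs (y - x) < eta -> de/2 <= v <= x + eta -> U y v.
Proof.
intros Hde HxT.
assert (Uxx : U x x) by (apply HO; unfold Omega; lra).
destruct (HU x x Uxx) as [r0 [Hr0 Hbox]].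
destruct (open2_tube U x (de/2) (x + r0/2) HU) as [eta [Heta Htube]].
{ intros r Hr. destruct (Rle_dec r x).
  - apply HO. unfold Omega. lra.
  - apply Hbox. rewrite Rminus_diag, Rabs_R0. auto. rewrite Rabs_pos_eq; lra. }
exists (Rmin eta (r0/2)). split. apply Rmin_pos; lra.
intros y v Hy Hv. pose proof (Rmin_l eta (r0/2)). pose proof (Rmin_r eta (r0/2)).
apply Htube; lra.
Qed.

Lemma integral_Derive_dens de x : 0 < de < x -> x <= T0 ->
  RInt (fun v => Derive (fun z => dens z v) x) de x = flux x x - flux x de.
Proof.
intros Hde HxT.
assert (HOx : forall v, de <= v <= x -> Omega T0 x v) by (intros; unfold Omega; lra).
rewrite (RInt_ext _ (flux_r x)).
- apply is_RInt_unique.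
  apply (is_RInt_derive (V:=R_CompleteNormedModule) (fun v => flux x v)); intros v Hv;
    rewrite Rmin_left, Rmax_right in Hv by lra.
  + apply flux_derive_r. apply HO, HOx; lra. lra.
  + apply continuity_pt_filterlim, continuity_2d_pt_section, flux_r_continuous.
    apply HO, HOx; lra. lra.
- intros v Hv. rewrite Rmin_left, Rmax_right in Hv by lra.
  rewrite <- conservation_law; [| apply HOx; lra | lra].
  apply is_derive_unique, dens_derive_t. apply HO, HOx; lra. lra.
Qed.

(* Energy balance on [de,x]:  d/dx int_de^x e r = (e r + w r u_t u_r)(x,x)
   - (w r u_t u_r)(x,de), by the Leibniz rule and conservation. *)
Lemma energy_from_derive de x : 0 < de < x -> x <= T0 ->
  is_derive (energy_from de) x (dens x x + flux x x - flux x de).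
Proof.
intros Hde HxT.
destruct (strip_beyond_cone de x Hde HxT) as [eta [Heta Hstrip]].
assert (Hoff : forall y v, Rabs (y - x) < eta -> de/2 <= v <= x + eta -> U y v /\ v <> 0).
{ intros y v Hy Hv. split. apply Hstrip; auto. lra. }
assert (Hint : forall y a b, Rabs (y - x) < eta -> de/2 <= a -> a <= b -> b <= x + eta ->
   ex_RInt (fun v => dens y v) a b).
{ intros y a b Hy Ha Hab Hb. apply (ex_RInt_continuous (V:=R_CompleteNormedModule)).
  intros z Hz. rewrite Rmin_left, Rmax_right in Hz by lra.
  destruct (Hoff y z Hy) as [Hyz Hz0]. lra.
  apply continuity_pt_filterlim, dens_continuous_r; auto. }
set (e0 := Rmin (de/4) (eta/2)).
assert (He0 : 0 < e0) by (unfold e0; apply Rmin_pos; lra).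
assert (He01 : e0 <= de/4) by apply Rmin_l.
assert (He02 : e0 <= eta/2) by apply Rmin_r.
assert (Uxx : U x x) by (apply HO; unfold Omega; lra).
replace (dens x x + flux x x - flux x de)
  with (RInt (fun t => Derive (fun z => dens z t) x) de x + dens x x * 1)
  by (rewrite integral_Derive_dens by auto; ring).
apply (is_derive_RInt_param_bound_comp_aux3 dens de (fun z => z)).
- apply locally_iff_ball. exists eta. split; auto. intros y Hy. apply Hint; auto; lra.
- exists (mkposreal e0 He0). apply locally_iff_ball. exists eta. split; auto.
  intros y Hy. apply Hint; simpl; auto; lra.
- apply (is_derive_id (K:=R_AbsRing)).
- exists (mkposreal e0 He0). apply locally_iff_ball. exists eta. split; auto.
  intros y Hy t Ht. simpl in Ht.
  assert (de/2 <= Rmin de (x - e0)) by (apply Rmin_glb; lra).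
  assert (Rmax de (x + e0) <= x + eta) by (apply Rmax_lub; lra).
  destruct (Hoff y t Hy) as [Hyt Ht0]. lra.
  eexists. apply dens_derive_t; auto.
- intros t Ht. rewrite Rmin_left, Rmax_right in Ht by lra.
  apply Derive_dens_continuous. apply HO; unfold Omega; lra. lra.
- apply Derive_dens_continuous_near; auto. lra.
- apply dens_continuous_r; auto. lra.
Qed.

(* Since the cone flux is nonnegative, E restricted to [de,T] can only lose
   energy through the inner sphere r = de, where the flux is O(de). *)
Lemma energy_from_growth C de T1 T2 : 0 < de < T1 -> T1 < T2 -> T2 <= T0 ->
  (forall t, T1 <= t <= T2 -> Rabs (flux t de) <= C * de) ->
  energy_from de T1 - C * de * (T2 - T1) <= energy_from de T2.
Proof.
intros Hde HT HT2 HB.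
assert (Hder : forall z, T1 <= z <= T2 ->
  is_derive (fun z => energy_from de z + C * de * z) z (dens z z + flux z z - flux z de + C * de)).
{ intros z Hz. apply (is_derive_plus (K:=R_AbsRing) (V:=R_NormedModule)).
  - apply energy_from_derive; lra.
  - replace (C * de) with (C * de * 1) at 2 by ring.
    apply is_derive_scal, (is_derive_id (K:=R_AbsRing)). }
destruct (MVT_gen (fun z => energy_from de z + C * de * z) T1 T2
   (fun z => dens z z + flux z z - flux z de + C * de)) as [c [Hc Hmvt]];
  rewrite ?Rmin_left, ?Rmax_right in * by lra.
- intros z Hz. apply Hder. lra.
- intros z Hz. apply derivable_continuous_pt. eexists. apply is_derive_Reals, Hder. lra.
- assert (Hcone : 0 <= dens c c + flux c c) by (apply cone_flux_nonneg; lra).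
  pose proof (Rle_abs (flux c de)). pose proof (HB c ltac:(lra)).
  assert (0 <= (dens c c + flux c c - flux c de + C * de) * (T2 - T1))
    by (apply Rmult_le_pos; lra).
  simpl in Hmvt. lra.
Qed.

(* E is nondecreasing: the energy outside the de-ball gains at least -O(de)
   and the energy inside is O(de^2); let de -> 0. *)
Lemma energy_monotone T1 T2 : 0 < T1 <= T2 -> T2 <= T0 -> energy T1 <= energy T2.
Proof.
intros HT HT2. destruct (Req_dec T1 T2) as [<-|Hne]; [lra|].
destruct (near_axis_bound T1 T2 HT HT2) as [C [HC HB]].
cut (0 <= energy T2 - energy T1); [lra|].
apply (nonneg_of_small_defect _ (C * (2 * T1 + T2)) T1); try lra.
{ apply Rmult_le_pos; lra. }
intros de Hd.
rewrite (energy_split de T2), (energy_split de T1) by lra.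
pose proof (inner_energy_small C T1 T2 T1 de HT HT2 HC HB ltac:(lra) Hd) as Hin1.
pose proof (inner_energy_small C T1 T2 T2 de HT HT2 HC HB ltac:(lra) Hd) as Hin2.
pose proof (energy_from_growth C de T1 T2 Hd ltac:(lra) HT2
  (fun t Ht => proj2 (HB t de Ht ltac:(lra)))) as Hgrowth.
apply Rabs_le_between in Hin1. apply Rabs_le_between in Hin2.
assert (de * (C * de) <= de * (C * T1)) by (apply Rmult_le_compat_l; [lra|apply Rmult_le_compat_l; lra]).
assert (C * de * (T2 - T1) <= de * (C * T2)) by nra.
nra.
Qed.

(* E is continuous on (0,T0]: the part outside a small ball is differentiable,
   and the part inside is uniformly small. *)
Lemma energy_continuous x : 0 < x <= T0 -> forall eps, 0 < eps -> exists d, 0 < d /\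
  forall t, Rabs (t - x) < d -> 0 < t <= T0 -> Rabs (energy t - energy x) < eps.
Proof.
intros Hx eps Heps.
destruct (near_axis_bound (x/2) T0 ltac:(lra) ltac:(lra)) as [C [HC HB]].
set (de := Rmin (x/4) (Rmin 1 (eps / (8 * (C + 1))))).
assert (Hd1 : de <= x/4) by apply Rmin_l.
assert (Hd2 : de <= 1) by (eapply Rle_trans; [apply Rmin_r|apply Rmin_l]).
assert (Hd3 : de <= eps / (8 * (C + 1))) by (eapply Rle_trans; [apply Rmin_r|apply Rmin_r]).
assert (Hd0 : 0 < de).
{ unfold de. repeat apply Rmin_pos; try lra. apply Rdiv_lt_0_compat; lra. }
assert (HCde : C * de <= eps / 8).
{ apply Rle_trans with ((C + 1) * (eps / (8 * (C + 1)))).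
  - apply Rle_trans with ((C + 1) * de); [nra|]. apply Rmult_le_compat_l; lra.
  - right. field. lra. }
assert (Hinner : forall t, x/2 <= t <= T0 -> Rabs (RInt (fun v => dens t v) 0 de) <= eps / 8).
{ intros t Ht. eapply Rle_trans.
  - apply (inner_energy_small C (x/2) T0 t de); auto; lra.
  - assert (de * (C * de) <= 1 * (C * de)) by (apply Rmult_le_compat_r; nra). lra. }
assert (Hcont : continuity_pt (energy_from de) x).
{ apply derivable_continuous_pt. eexists. apply is_derive_Reals, energy_from_derive; lra. }
destruct (proj2 (locally_iff_ball _ _)
  (proj1 (continuity_pt_locally _ _) Hcont (mkposreal (eps/2) ltac:(lra)))) as [d1 [Hd1' H1]].
exists (Rmin d1 (x/2)). split. apply Rmin_pos; lra.
intros t Ht Ht0. pose proof (Rmin_l d1 (x/2)). pose proof (Rmin_r d1 (x/2)).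
apply Rabs_def2 in Ht as Ht'.
specialize (H1 t ltac:(lra)). simpl in H1.
rewrite (energy_split de t), (energy_split de x) by lra.
pose proof (Hinner t ltac:(lra)). pose proof (Hinner x ltac:(lra)).
set (a1 := RInt (fun v => dens t v) 0 de) in *. set (a2 := RInt (fun v => dens x v) 0 de) in *.
replace (a1 + energy_from de t - (a2 + energy_from de x))
  with (a1 + (- a2) + (energy_from de t - energy_from de x)) by ring.
eapply Rle_lt_trans. apply Rabs_triang.
eapply Rle_lt_trans. apply Rplus_le_compat_r. apply Rabs_triang. rewrite Rabs_Ropp. lra.
Qed.

End SkyrmeEnergy.

Theorem mainTheorem8
  (alpha T0 : R) (Halpha : 0 < alpha) (HT0 : 0 < T0)
  (U : R -> R -> Prop) (u ut ur utt urr : R -> R -> R)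
  (HUopen : open2 U)
  (HOmegaU : forall t r, Omega T0 t r -> U t r)
  (Hsmooth : smooth_on U u)
  (Hut : forall t r, U t r -> derivable_pt_lim (fun s => u s r) t (ut t r))
  (Hur : forall t r, U t r -> derivable_pt_lim (fun s => u t s) r (ur t r))
  (Hutt : forall t r, U t r -> derivable_pt_lim (fun s => ut s r) t (utt t r))
  (Hurr : forall t r, U t r -> derivable_pt_lim (fun s => ur t s) r (urr t r))
  (Heq : forall t r, Omega T0 t r -> 0 < r ->
           skyrme_eq alpha r (u t r) (ut t r) (ur t r) (utt t r) (urr t r))
  (Hbc : forall t, 0 < t <= T0 -> u t 0 = 0) :
  exists (E G : R -> R) (L : R),
    (forall T, 0 < T <= T0 ->
       is_RInt (fun r => edens alpha (u T r) (ut T r) (ur T r) r * r) 0 T (E T)) /\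
    (forall T, 0 < T <= T0 -> is_RInt E 0 T (G T)) /\
    lim_right0 T0 E L /\
    lim_right0 T0 (fun T => G T / T) L.
Proof.
destruct (smooth_regular U u ut ur utt urr HUopen Hsmooth Hut Hur Hutt Hurr) as [urt Hreg].
set (E := energy alpha u ut ur).
assert (Hmono : forall a b, 0 < a -> a <= b -> b <= T0 -> E a <= E b).
{ intros a b Ha Hab Hb. apply (energy_monotone alpha T0 U u ut ur utt urr urt); auto. }
assert (Hcont := energy_continuous alpha T0 U u ut ur utt urr urt HUopen Hreg HOmegaU Heq Hbc).
destruct (nondecreasing_limit_right0 T0 E HT0 Hmono 0) as [L [HL Hlim]].
{ intros t Ht. apply (energy_nonneg alpha T0 U u ut ur utt urr urt); auto. }
exists (extend_by_limit T0 E L), (fun T => RInt (extend_by_limit T0 E L) 0 T), L.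
split; [|split; [|split]].
- intros T HT. rewrite extend_by_limit_eq by auto.
  pose proof (dens_integrable alpha T0 U u ut ur utt urr urt HUopen Hreg HOmegaU Hbc T HT) as Hint.
  exists (ex_RInt_Reals_0 _ _ _ Hint). rewrite <- RInt_Reals. reflexivity.
- intros T HT. exists (extend_by_limit_integrable T0 E HT0 Hcont L Hlim T HT).
  rewrite <- RInt_Reals. reflexivity.
- apply extend_by_limit_lim; auto.
- apply average_limit_right0; auto.
Qed.
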